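(* Let $k\ge 1$. Any unitary circuit composed of Clifford gates and $T$/$T^\dagger$ gates that implements the $(k+1)$-qubit multiply-controlled $Z$ gate $C^kZ = I^{\otimes(k+1)}-2\ket{1\cdots1}\bra{1\cdots1}$ contains at least $2k-2$ gates equal to $T$ or $T^\dagger$.
   Context: Clifford gates are unitaries mapping Pauli operators ($\pm$ tensor products of $I,X,Y,Z$) to Pauli operators under conjugation. $T=\mathrm{diag}(1,e^{i\pi/4})$. *)

From HB Require Import structures.
From mathcomp Require Import all_boot all_order all_algebra.
From mathcomp Require Import reals.
From mathcomp Require Import complex.
Set Implicit Arguments. Unset Strict Implicit. Unset Printing Implicit Defensive.
Import Order.TTheory GRing.Theory Num.Theory.
Local Open Scope ring_scope.

Section QC.
Variable R : realType.
Local Notation C := R[i].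

(* Computational basis of n qubits: index r : 'I_(2^n); qubit j of r is bit j
   of the binary expansion of r. *)
Definition qbit (n : nat) (r : 'I_(2 ^ n)) (j : 'I_n) : 'I_2 :=
  inord (odd (r %/ 2 ^ j)).

Definition tens (n : nat) (P : 'I_n -> 'M[C]_2) : 'M[C]_(2 ^ n) :=
  \matrix_(r, c) \prod_(j < n) P j (qbit r j) (qbit c j).

Definition adj (m : nat) (A : 'M[C]_m) : 'M[C]_m := (map_mx (@conjc R) A)^T.

Definition unitary (m : nat) (U : 'M[C]_m) : Prop := U *m adj U = 1%:M.

Definition pauliI : 'M[C]_2 := 1%:M.
Definition pauliX : 'M[C]_2 := \matrix_(a, b) (a != b)%:R.
Definition pauliY : 'M[C]_2 :=
  \matrix_(a, b) (if (a == 0) && (b == 1) then - (Complex 0 1)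
                  else if (a == 1) && (b == 0) then Complex 0 1 else 0).
Definition pauliZ : 'M[C]_2 :=
  \matrix_(a, b) (if a == b then (if a == 0 then 1 else -1) else 0).

Definition pauli1 (p : 'I_4) : 'M[C]_2 :=
  match val p with 0 => pauliI | 1 => pauliX | 2 => pauliY | _ => pauliZ end.

Definition is_pauli (n : nat) (A : 'M[C]_(2 ^ n)) : Prop :=
  exists (s : bool) (f : 'I_n -> 'I_4),
    A = (-1) ^+ s *: tens (fun j => pauli1 (f j)).

Definition clifford (n : nat) (U : 'M[C]_(2 ^ n)) : Prop :=
  unitary U /\ forall P, is_pauli P -> is_pauli (U *m P *m adj U).

(* omega = e^{i pi/4} = (1 + i)/sqrt 2 ;  T = diag(1, omega) *)
Definition omega8 : C := Complex (Num.sqrt 2)^-1 (Num.sqrt 2)^-1.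
Definition Tgate : 'M[C]_2 :=
  \matrix_(a, b) (if a == b then (if a == 0 then 1 else omega8) else 0).
Definition Tdgate : 'M[C]_2 := adj Tgate.

Definition on_qubit (n : nat) (j : 'I_n) (G : 'M[C]_2) : 'M[C]_(2 ^ n) :=
  tens (fun i => if i == j then G else 1%:M).

(* A Clifford gate is given as the
   n-qubit Clifford unitary it implements (a Clifford acting on a subset of
   qubits, tensored with identity, is such a unitary). *)
Inductive gate (n : nat) : Type :=
| GCliff of 'M[C]_(2 ^ n)
| GT of 'I_n
| GTdag of 'I_n.

Definition gate_mx (n : nat) (g : gate n) : 'M[C]_(2 ^ n) :=
  match g with
  | GCliff U => U
  | GT j => on_qubit j Tgate
  | GTdag j => on_qubit j Tdgate
  end.

Definition gate_ok (n : nat) (g : gate n) : Prop :=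
  match g with GCliff U => clifford U | _ => True end.

Definition circuit_ok (n : nat) (c : seq (gate n)) : Prop :=
  foldr (fun g P => gate_ok g /\ P) True c.

Definition is_T (n : nat) (g : gate n) : bool :=
  match g with GCliff _ => false | _ => true end.

(* circuit [g1; ...; gm] (g1 applied first) implements gm * ... * g1 *)
Definition circuit_mx (n : nat) (c : seq (gate n)) : 'M[C]_(2 ^ n) :=
  foldl (fun acc g => gate_mx g *m acc) 1%:M c.

Definition T_count (n : nat) (c : seq (gate n)) : nat := count (@is_T n) c.

Definition all_ones (n : nat) (r : 'I_(2 ^ n)) : bool :=
  [forall j : 'I_n, qbit r j == 1].
Definition CkZ (n : nat) : 'M[C]_(2 ^ n) :=
  1%:M - 2%:R *: \matrix_(r, c) ((all_ones r && all_ones c)%:R : C).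

End QC.

(* Call S the Z[sqrt 2]-span of the
   n-qubit Pauli strings.  Clifford conjugation maps Pauli strings to signed
   Pauli strings, and sqrt 2 * T P T^dagger (also for T^dagger) is a
   Z[sqrt 2]-combination of Pauli strings; hence for a circuit U with t T-gates,
   sqrt(2)^t U P U^dagger lies in S for every Pauli string P.  Pauli strings
   are orthogonal for the trace form, so tr(Q A) lies in 2^n Z[sqrt 2] for all
   A in S and all Pauli strings Q.  For U = C^kZ on n = k+1 qubits, with
   P = X I ... I and Q = X Z ... Z, a direct computation with the reflection
   C^kZ = 1 - 2|1..1><1..1| gives tr(Q U P U^dagger) = +-4, so
   sqrt(2)^t * 4 lies in 2^(k+1) Z[sqrt 2], and a parity argument in
   Z[sqrt 2] yields t >= 2(k-1). *)

From HB Require Import structures.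
From mathcomp Require Import all_boot all_order all_algebra.
From mathcomp Require Import reals complex.
From mathcomp Require Import zify ring lra.
Set Implicit Arguments. Unset Strict Implicit. Unset Printing Implicit Defensive.
Import Order.TTheory GRing.Theory Num.Theory.

Lemma binary_digits_inj (n r c : nat) : (r < 2 ^ n)%N -> (c < 2 ^ n)%N ->
  (forall j, (j < n)%N -> odd (r %/ 2 ^ j) = odd (c %/ 2 ^ j)) -> r = c.
Proof.
elim: n r c => [|n IH] r c.
  by rewrite expn0 !ltnS !leqn0 => /eqP -> /eqP ->.
move=> hr hc hbits.
have hodd := hbits 0%N (ltn0Sn _); rewrite expn0 !divn1 in hodd.
rewrite -[r]odd_double_half -[c]odd_double_half hodd -!divn2.
rewrite (IH (r %/ 2) (c %/ 2)) // ?ltn_divLR -?expnSr //.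
by move=> j hj; rewrite -!divnMA -expnS; apply: hbits.
Qed.

Local Open Scope ring_scope.

(* The bit string of a basis index; it identifies 'I_(2^n) with 'I_n -> 'I_2,
   which turns the matrix entries of tensor products into products. *)
Definition bitvec (n : nat) (r : 'I_(2 ^ n)) : {ffun 'I_n -> 'I_2} :=
  [ffun j => qbit r j].

Lemma bitvec_bij (n : nat) : bijective (@bitvec n).
Proof.
apply: inj_card_bij; last by rewrite card_ffun !card_ord.
move=> r c /ffunP hrc; apply/val_inj/(@binary_digits_inj n); rewrite ?ltn_ord //.
move=> j hj; have := hrc (Ordinal hj); rewrite !ffunE /qbit.
by move/(congr1 val); rewrite /= !inordK //; case: odd; case: odd.
Qed.

Lemma all_ones_index (n : nat) : exists o : 'I_(2 ^ n),
  (forall j, qbit o j = 1) /\ forall r, all_ones r = (r == o).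
Proof.
have [g gK Kg] := bitvec_bij n.
have qbit_o j : qbit (g [ffun _ => 1]) j = 1.
  by have /ffunP/(_ j) := Kg [ffun _ => 1]; rewrite !ffunE.
exists (g [ffun _ => 1]); split => // r; apply/forallP/eqP => [hr|-> j].
  by rewrite -[r]gK; congr g; apply/ffunP => j; rewrite !ffunE; apply/eqP.
by rewrite qbit_o.
Qed.

Section TensorProducts.
Variable R : realType.
Local Notation C := R[i].

Lemma sum_bitvec (n : nat) (F : {ffun 'I_n -> 'I_2} -> C) :
  \sum_(r < 2 ^ n) F (bitvec r) = \sum_f F f.
Proof. by rewrite (reindex (@bitvec n)) //; apply: onW_bij; apply: bitvec_bij. Qed.

Lemma eq_tens (n : nat) (P Q : 'I_n -> 'M[C]_2) : P =1 Q -> tens P = tens Q.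
Proof. by move=> PQ; apply/matrixP => r c; rewrite !mxE; apply: eq_bigr => j _; rewrite PQ. Qed.

Lemma tens_mul (n : nat) (P Q : 'I_n -> 'M[C]_2) :
  tens P *m tens Q = tens (fun j => P j *m Q j).
Proof.
apply/matrixP => r c; rewrite !mxE.
under eq_bigr do rewrite !mxE -big_split /=.
under [RHS]eq_bigr do rewrite mxE.
rewrite bigA_distr_bigA /= -sum_bitvec.
by apply: eq_bigr => m _; apply: eq_bigr => j _; rewrite ffunE.
Qed.

Lemma tens_trace (n : nat) (P : 'I_n -> 'M[C]_2) :
  \tr (tens P) = \prod_j \tr (P j).
Proof.
rewrite (bigA_distr_bigA (fun j b => P j b b)) /= -sum_bitvec.
by apply: eq_bigr => i _; rewrite mxE; apply: eq_bigr => j _; rewrite ffunE.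
Qed.

Lemma adj_mul (m : nat) (A B : 'M[C]_m) : adj (A *m B) = adj B *m adj A.
Proof. by rewrite /adj map_mxM trmx_mul. Qed.

Lemma adj1 (m : nat) : adj (1%:M : 'M[C]_m) = 1%:M.
Proof. by apply/matrixP => i j; rewrite !mxE eq_sym; case: eqP => _; rewrite ?conjc1 ?conjc0. Qed.

Lemma adj_tens (n : nat) (P : 'I_n -> 'M[C]_2) :
  adj (tens P) = tens (fun j => adj (P j)).
Proof.
apply/matrixP => r c; rewrite /adj /tens !mxE rmorph_prod.
by apply: eq_bigr => j _; rewrite !mxE.
Qed.

Lemma tens_slot_linear (n : nat) (j : 'I_n) (P : 'I_n -> 'M[C]_2) (x y : C)
    (A B : 'M[C]_2) :
  tens (fun i => if i == j then x *: A + y *: B else P i) =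
  x *: tens (fun i => if i == j then A else P i) +
  y *: tens (fun i => if i == j then B else P i).
Proof.
apply/matrixP => r c; rewrite /tens !mxE.
rewrite (bigD1 j) //= (bigD1 j (P := predT)) //= (bigD1 j (P := predT)) //=.
rewrite !eqxx !mxE mulrDl !mulrA.
by congr (_ * _ * _ + _ * _ * _); apply: eq_bigr => i /negPf ->.
Qed.

Lemma tens_slot_scale (n : nat) (j : 'I_n) (P : 'I_n -> 'M[C]_2) (x : C) (A : 'M[C]_2) :
  x *: tens (fun i => if i == j then A else P i) =
  tens (fun i => if i == j then x *: A else P i).
Proof. by rewrite -[x *: A]addr0 -[0 : 'M_2](scale0r A) tens_slot_linear scale0r addr0. Qed.

Lemma tens_all_ones (n : nat) (P : 'I_n -> 'M[C]_2) (o : 'I_(2 ^ n)) :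
  (forall j, qbit o j = 1) -> tens P o o = \prod_j P j 1 1.
Proof. by move=> ho; rewrite mxE; apply: eq_bigr => j _; rewrite ho. Qed.

End TensorProducts.

Section Sqrt2Arithmetic.
Variable R : rcfType.
Local Notation sqrt2 := (Num.sqrt (2 : R)).

Lemma sqrt2_sq : sqrt2 * sqrt2 = 2.
Proof. by rewrite -expr2 sqr_sqrtr ?ler0n. Qed.

Lemma int_sqrt2_relation (x y : int) : x%:~R = y%:~R * sqrt2 -> x ^+ 2 = 2 * y ^+ 2.
Proof.
move=> hxy; apply/eqP; rewrite !expr2 -(eqr_int R) !intrM hxy.
by rewrite mulrACA sqrt2_sq mulrC.
Qed.

(* Neither 1 nor sqrt 2 lies in 2 Z[sqrt 2]: square, then compare parities. *)
Lemma one_notin_2Zsqrt2 (a b : int) : 1 != 2 * (a%:~R + b%:~R * sqrt2).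
Proof.
apply/eqP => h.
have /int_sqrt2_relation : ((1 - 2 * a)%:~R : R) = (2 * b)%:~R * sqrt2.
  by rewrite intrB !intrM {1}h; ring.
lia.
Qed.

Lemma sqrt2_notin_2Zsqrt2 (a b : int) : sqrt2 != 2 * (a%:~R + b%:~R * sqrt2).
Proof.
apply/eqP => h.
have /int_sqrt2_relation : ((2 * a)%:~R : R) = (1 - 2 * b)%:~R * sqrt2.
  by rewrite intrB !intrM mulrBl mul1r {1}h; ring.
lia.
Qed.

(* If sqrt(2)^t is divisible by 2^m in Z[sqrt 2], then t >= 2m: write
   t = 2u + e; if u < m, cancelling 2^u leaves sqrt(2)^e in 2 Z[sqrt 2]. *)
Lemma sqrt2_power_divisibility (t m : nat) (a b : int) :
  sqrt2 ^+ t = 2 ^+ m * (a%:~R + b%:~R * sqrt2) -> (2 * m <= t)%N.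
Proof.
move=> E; rewrite leqNgt; apply/negP => ltt.
set u := t./2; set e := odd t.
have ltum : (u < m)%N by rewrite /u /e; lia.
have Et : sqrt2 ^+ t = 2 ^+ u * sqrt2 ^+ e.
  by rewrite -[in LHS](odd_double_half t) exprD -mul2n exprM expr2 sqrt2_sq mulrC.
pose d : int := (2 ^ (m - u).-1)%N.
have Em : (2 : R) ^+ m = 2 ^+ u * (2 * d%:~R).
  rewrite /d pmulrn -natrX -natrM -natrX -expnS prednK ?subn_gt0 // -natrM.
  by rewrite -expnD subnKC // ltnW.
have two_neq0 : (2 : R) != 0 by rewrite pnatr_eq0.
rewrite Et Em -mulrA in E; move/(mulfI (expf_neq0 u two_neq0)): E.
rewrite -mulrA mulrDr !mulrA -!intrM; clearbody e d => /eqP; apply/negP.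
by case: e {Et} => /=; rewrite ?expr1 ?expr0;
  [apply: sqrt2_notin_2Zsqrt2 | apply: one_notin_2Zsqrt2].
Qed.

End Sqrt2Arithmetic.

Section PhaseGates.
Variable R : realType.
Local Notation C := R[i].
Local Notation "x %:C" := (real_complex _ x) (format "x %:C").

Definition phase (g : C) : 'M[C]_2 :=
  \matrix_(a, b) (if a == b then (if a == 0 then 1 else g) else 0).

Lemma Tgate_phase : Tgate R = phase (omega8 R).
Proof. by []. Qed.

Lemma Tdgate_phase : Tdgate R = phase (omega8 R)^*.
Proof.
apply/matrixP; case=> -[|[|//]] ?; case=> -[|[|//]] ?; rewrite !mxE /=.
all: by rewrite ?oppr0.
Qed.

Lemma phase_conj_pauli (x y : R) (g := Complex x y) : x ^+ 2 + y ^+ 2 = 1 ->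
  [/\ phase g *m pauliI R *m adj (phase g) = pauliI R,
      phase g *m pauliZ R *m adj (phase g) = pauliZ R,
      phase g *m pauliX R *m adj (phase g) = x%:C *: pauliX R + y%:C *: pauliY R &
      phase g *m pauliY R *m adj (phase g) = x%:C *: pauliY R - y%:C *: pauliX R].
Proof.
move=> unit_g; split; apply/matrixP;
  case=> -[|[|//]] ?; case=> -[|[|//]] ? /=;
  rewrite /adj /pauliI !mxE !big_ord_recr !big_ord0 /= !mxE /= !big_ord_recr !big_ord0 /= !mxE /=;
  simpc; try by [].
all: by congr Complex; nra.
Qed.

End PhaseGates.

Section PauliSpanInvariant.
Variable R : realType.
Local Notation C := R[i].
Local Notation "x %:C" := (real_complex _ x) (format "x %:C").
Local Notation sqrt2 := (Num.sqrt (2 : R)).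
Local Notation sqrt2C := (sqrt2%:C).

Definition Zsqrt2 (z : C) : Prop := exists a b : int, z = (a%:~R + b%:~R * sqrt2)%:C.

Lemma Zsqrt2_int (a : int) : Zsqrt2 a%:~R.
Proof. by exists a, 0; rewrite mul0r addr0 -[LHS](rmorph_int (real_complex R)). Qed.

Lemma Zsqrt2_sign (e : nat) : Zsqrt2 ((-1) ^+ e).
Proof. by rewrite -intr_sign; apply: Zsqrt2_int. Qed.

Lemma Zsqrt2_sqrt2 : Zsqrt2 sqrt2C.
Proof. by exists 0, 1; rewrite mul1r add0r. Qed.

Lemma Zsqrt2D (x y : C) : Zsqrt2 x -> Zsqrt2 y -> Zsqrt2 (x + y).
Proof.
move=> [a [b ->]] [c [d ->]]; exists (a + c), (b + d).
by rewrite -rmorphD !intrD; congr _%:C; ring.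
Qed.

Lemma Zsqrt2N (x : C) : Zsqrt2 x -> Zsqrt2 (- x).
Proof.
move=> [a [b ->]]; exists (- a), (- b).
by rewrite -rmorphN !intrN; congr _%:C; ring.
Qed.

Lemma Zsqrt2M (x y : C) : Zsqrt2 x -> Zsqrt2 y -> Zsqrt2 (x * y).
Proof.
move=> [a [b ->]] [c [d ->]]; exists (a * c + 2 * b * d), (a * d + b * c).
rewrite -rmorphM !intrD !intrM; congr _%:C.
by rewrite -[(2 : int)%:~R](sqrt2_sq R); ring.
Qed.

Lemma Zsqrt2_power_divisibility (t m : nat) (z : C) :
  Zsqrt2 z -> sqrt2C ^+ t = 2 ^+ m * z -> (2 * m <= t)%N.
Proof.
move=> [a [b ->]]; rewrite -rmorphXn -(rmorph_nat (real_complex R)) -rmorphXn -rmorphM.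
by move/complexI; apply: sqrt2_power_divisibility.
Qed.

Definition pauli_string (n : nat) (f : 'I_n -> 'I_4) : 'M[C]_(2 ^ n) :=
  tens (fun j => pauli1 R (f j)).

Inductive pauli_span (n : nat) : 'M[C]_(2 ^ n) -> Prop :=
| pauli_span0 : pauli_span 0
| pauli_spanD A B : pauli_span A -> pauli_span B -> pauli_span (A + B)
| pauli_spanP x f : Zsqrt2 x -> pauli_span (x *: pauli_string f).

Lemma pauli_spanZ (n : nat) (x : C) (A : 'M[C]_(2 ^ n)) :
  Zsqrt2 x -> pauli_span A -> pauli_span (x *: A).
Proof.
move=> hx; elim=> [|B D _ hB _ hD|y f hy].
- by rewrite scaler0; apply: pauli_span0.
- by rewrite scalerDr; apply: pauli_spanD.
- by rewrite scalerA; apply/pauli_spanP/Zsqrt2M.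
Qed.

Lemma pauli_span_conj (n : nat) (w : C) (G : 'M[C]_(2 ^ n)) :
  (forall f, pauli_span (w *: (G *m pauli_string f *m adj G))) ->
  forall A, pauli_span A -> pauli_span (w *: (G *m A *m adj G)).
Proof.
move=> hG A; elim=> [|B D _ hB _ hD|y f hy].
- by rewrite mulmx0 mul0mx scaler0; apply: pauli_span0.
- by rewrite mulmxDr mulmxDl scalerDr; apply: pauli_spanD.
- rewrite -scalemxAr -scalemxAl scalerA mulrC -scalerA.
  exact: pauli_spanZ.
Qed.

Lemma clifford_conj_span (n : nat) (G : 'M[C]_(2 ^ n)) (f : 'I_n -> 'I_4) :
  clifford G -> pauli_span (G *m pauli_string f *m adj G).
Proof.
case=> _ /(_ (pauli_string f)) [|b [g ->]].
  by exists false, f; rewrite expr0 scale1r.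
by apply/pauli_spanP/Zsqrt2_sign.
Qed.

Definition iI : 'I_4 := @Ordinal 4 0 isT.
Definition iX : 'I_4 := @Ordinal 4 1 isT.
Definition iY : 'I_4 := @Ordinal 4 2 isT.
Definition iZ : 'I_4 := @Ordinal 4 3 isT.

Definition sqrt2_pauli_action (G : 'M[C]_2) : Prop :=
  forall a : 'I_4, exists (x y : C) (b c : 'I_4), [/\ Zsqrt2 x, Zsqrt2 y &
    sqrt2C *: (G *m pauli1 R a *m adj G) = x *: pauli1 R b + y *: pauli1 R c].

Lemma phase_action (x y : R) : x ^+ 2 + y ^+ 2 = 1 ->
  Zsqrt2 (sqrt2 * x)%:C -> Zsqrt2 (sqrt2 * y)%:C ->
  sqrt2_pauli_action (phase (Complex x y)).
Proof.
move=> /phase_conj_pauli [hI hZ hX hY] hx hy.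
case=> -[|[|[|[|//]]]] ?; rewrite /pauli1 /=.
- exists sqrt2C, 0, iI, iI; rewrite hI scale0r addr0.
  by split=> //; [apply: Zsqrt2_sqrt2 | apply: (Zsqrt2_int 0)].
- exists (sqrt2 * x)%:C, (sqrt2 * y)%:C, iX, iY.
  by rewrite hX scalerDr !scalerA -!rmorphM.
- exists (sqrt2 * x)%:C, (- (sqrt2 * y))%:C, iY, iX; rewrite rmorphN.
  by rewrite hY scalerBr !scalerA -!rmorphM scaleNr; split=> //; apply: Zsqrt2N.
- exists sqrt2C, 0, iZ, iZ; rewrite hZ scale0r addr0.
  by split=> //; [apply: Zsqrt2_sqrt2 | apply: (Zsqrt2_int 0)].
Qed.

(* T and T^dagger are the phases (1 +- i)/sqrt 2. *)
Lemma T_Tdag_action : sqrt2_pauli_action (Tgate R) /\ sqrt2_pauli_action (Tdgate R).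
Proof.
set h := sqrt2^-1.
have sqrt2_neq0 : sqrt2 != 0 by rewrite sqrtr_eq0 -ltNge.
have unit_h : h ^+ 2 + (- h) ^+ 2 = 1.
  by rewrite sqrrN -mulr2n -mulr_natr exprVn sqr_sqrtr ?ler0n // mulVf ?pnatr_eq0.
have Zh : Zsqrt2 (sqrt2 * h)%:C by rewrite mulfV // rmorph1; apply: (Zsqrt2_int 1).
have Zmh : Zsqrt2 (sqrt2 * - h)%:C by rewrite mulrN rmorphN; apply: Zsqrt2N.
rewrite Tgate_phase Tdgate_phase /omega8 -/h /=.
by split; apply: phase_action => //; rewrite -[in X in _ + X]sqrrN.
Qed.

(* A single-qubit gate acts on one tensor factor of each Pauli string. *)
Lemma on_qubit_conj_span (n : nat) (j : 'I_n) (G : 'M[C]_2) (f : 'I_n -> 'I_4) :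
  sqrt2_pauli_action G ->
  pauli_span (sqrt2C *: (on_qubit j G *m pauli_string f *m adj (on_qubit j G))).
Proof.
move=> /(_ (f j)) [x [y [b [c [hx hy E]]]]].
pose fj (a : 'I_4) i := if i == j then a else f i.
have string_fj a : tens (fun i => if i == j then pauli1 R a else pauli1 R (f i))
                   = pauli_string (fj a).
  by apply: eq_tens => i; rewrite /fj; case: eqP.
rewrite /on_qubit /pauli_string adj_tens !tens_mul.
rewrite (@eq_tens _ _ _ (fun i => if i == j then G *m pauli1 R (f j) *m adj G
                                else pauli1 R (f i))); last first.
  by move=> i; case: eqP => [->|_] //; rewrite mul1mx adj1 mulmx1.
rewrite tens_slot_scale E tens_slot_linear !string_fj.
by apply: pauli_spanD; apply: pauli_spanP.
Qed.

Lemma gate_conj_span (n : nat) (g : gate R n) (f : 'I_n -> 'I_4) : gate_ok g ->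
  pauli_span (sqrt2C ^+ is_T g *: (gate_mx g *m pauli_string f *m adj (gate_mx g))).
Proof.
have [hT hTd] := T_Tdag_action.
case: g => [U|j|j] /=; rewrite ?expr1.
- by rewrite expr0 scale1r; apply: clifford_conj_span.
- by move=> _; apply: on_qubit_conj_span.
- by move=> _; apply: on_qubit_conj_span.
Qed.

Lemma circuit_ok_rcons (n : nat) (c : seq (gate R n)) (g : gate R n) :
  circuit_ok (rcons c g) -> circuit_ok c /\ gate_ok g.
Proof. by elim: c => [|h c IH] /= [hh hc] //; have [] := IH hc. Qed.

Lemma circuit_conj_span (n : nat) (c : seq (gate R n)) (f : 'I_n -> 'I_4) :
  circuit_ok c ->
  pauli_span (sqrt2C ^+ T_count c *: (circuit_mx c *m pauli_string f *m adj (circuit_mx c))).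
Proof.
elim/last_ind: c => [|c g IH].
  move=> _; rewrite /circuit_mx /= adj1 mul1mx mulmx1 expr0 scale1r -[pauli_string f]scale1r.
  exact/pauli_spanP/(Zsqrt2_int 1).
move=> /circuit_ok_rcons [hc hg].
rewrite /circuit_mx foldl_rcons -/(circuit_mx c) adj_mul !mulmxA.
rewrite /T_count -cats1 count_cat -/(T_count c) /= addn0 exprD mulrC -scalerA.
have -> : sqrt2C ^+ T_count c *: (gate_mx g *m circuit_mx c *m pauli_string f
            *m adj (circuit_mx c) *m adj (gate_mx g))
        = gate_mx g *m (sqrt2C ^+ T_count c *:
            (circuit_mx c *m pauli_string f *m adj (circuit_mx c))) *m adj (gate_mx g).
  by rewrite !scalemxAl !mulmxA -scalemxAr scalemxAl.
apply: pauli_span_conj (IH hc) => f'; exact: gate_conj_span.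
Qed.

Lemma pauli_trace (a b : 'I_4) : \tr (pauli1 R a *m pauli1 R b) = 2 * (a == b)%:R.
Proof.
case: a => -[|[|[|[|//]]]] ?; case: b => -[|[|[|[|//]]]] ?;
rewrite /pauli1 /= /mxtrace /pauliI;
do 3 rewrite ?mxE ?big_ord_recr ?big_ord0 /= ?add0r;
by simpc; rewrite ?addNr.
Qed.

Lemma pauli_span_trace (n : nat) (q : 'I_n -> 'I_4) (A : 'M[C]_(2 ^ n)) :
  pauli_span A -> exists z, Zsqrt2 z /\ \tr (pauli_string q *m A) = 2 ^+ n * z.
Proof.
elim=> [|B D _ [z1 [h1 e1]] _ [z2 [h2 e2]]|x f hx].
- by exists 0; split; [apply: (Zsqrt2_int 0) | rewrite mulmx0 mxtrace0 mulr0].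
- exists (z1 + z2); split; first exact: Zsqrt2D.
  by rewrite mulmxDr mxtraceD e1 e2 mulrDr.
- exists (x * \prod_j ((q j == f j)%:R)); split.
    apply: Zsqrt2M => //; apply: big_ind => //; [exact: (Zsqrt2_int 1) | exact: Zsqrt2M |].
    by move=> j _; case: eqP => _; [exact: (Zsqrt2_int 1) | exact: (Zsqrt2_int 0)].
  rewrite -scalemxAr mxtraceZ /pauli_string tens_mul tens_trace.
  under eq_bigr do rewrite pauli_trace.
  by rewrite big_split /= prodr_const card_ord mulrCA.
Qed.

End PauliSpanInvariant.

Section ReflectionTrace.
Variable K : comNzRingType.

Lemma mulmx_delta_entry (m : nat) (A : 'M[K]_m) (o r c : 'I_m) :
  (A *m delta_mx o o) r c = A r o * (c == o)%:R.
Proof.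
rewrite mxE (bigD1 o) //= big1 ?addr0 => [|l /negbTE ne_lo]; rewrite !mxE ?eqxx ?ne_lo //.
by rewrite mulr0.
Qed.

Lemma delta_mulmx_entry (m : nat) (A : 'M[K]_m) (o r c : 'I_m) :
  (delta_mx o o *m A) r c = (r == o)%:R * A o c.
Proof.
rewrite mxE (bigD1 o) //= big1 ?addr0 => [|l /negbTE ne_lo]; rewrite !mxE ?eqxx ?ne_lo //.
  by rewrite andbT.
by rewrite andbF mul0r.
Qed.

Lemma trace_mul_delta (m : nat) (A : 'M[K]_m) (o : 'I_m) :
  \tr (A *m delta_mx o o) = A o o.
Proof.
rewrite /mxtrace (bigD1 o) //= big1 ?addr0 => [|l /negbTE ne_lo];
  by rewrite mulmx_delta_entry ?eqxx ?mulr1 // ne_lo mulr0.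
Qed.

Lemma delta_sandwich (m : nat) (A : 'M[K]_m) (o : 'I_m) :
  delta_mx o o *m A *m delta_mx o o = A o o *: delta_mx o o.
Proof.
apply/matrixP => r c; rewrite mulmx_delta_entry delta_mulmx_entry !mxE.
by case: (r == o); case: (c == o); rewrite /= ?mulr1 ?mul1r ?mulr0 ?mul0r.
Qed.

Lemma trace_reflection_conj (m : nat) (o : 'I_m) (P Q : 'M[K]_m)
    (U := 1%:M - 2%:R *: delta_mx o o) :
  \tr (Q *m (U *m P *m U)) =
  \tr (Q *m P) - 2 * (P *m Q) o o - 2 * (Q *m P) o o + 4 * (Q o o * P o o).
Proof.
rewrite /U !(mulmxBl, mulmxBr, mul1mx, mulmx1) -!scalemxAl -!scalemxAr.
have tQDP : \tr (Q *m (delta_mx o o *m P)) = (P *m Q) o o.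
  by rewrite mulmxA mxtrace_mulC mulmxA trace_mul_delta.
have tQPD : \tr (Q *m (P *m delta_mx o o)) = (Q *m P) o o.
  by rewrite mulmxA trace_mul_delta.
have mxtraceB (A B : 'M[K]_m) : \tr (A - B) = \tr A - \tr B by apply: raddfB.
rewrite delta_sandwich -scalemxAr !mxtraceB !mxtraceZ tQDP tQPD trace_mul_delta.
ring.
Qed.

End ReflectionTrace.

Section CkZTrace.
Variable R : realType.
Local Notation C := R[i].

Lemma CkZ_reflection (n : nat) : exists o : 'I_(2 ^ n),
  (forall j, qbit o j = 1) /\ CkZ R n = 1%:M - 2%:R *: delta_mx o o.
Proof.
have [o [ho onesE]] := all_ones_index n; exists o; split; first exact: ho.
by congr (_ - _ *: _); apply/matrixP => r c; rewrite !mxE !onesE.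
Qed.

Lemma adj_reflection (m : nat) (o : 'I_m) :
  adj (1%:M - 2%:R *: delta_mx o o : 'M[C]_m) = 1%:M - 2%:R *: delta_mx o o.
Proof.
apply/matrixP => r c; rewrite !mxE rmorphB rmorphM !rmorph_nat.
by rewrite eq_sym andbC.
Qed.

Definition witnessP (n : nat) (j : 'I_n) : 'I_4 := if val j == 0%N then iX else iI.
Definition witnessQ (n : nat) (j : 'I_n) : 'I_4 := if val j == 0%N then iX else iZ.

(* tr(Q C^kZ P C^kZ) = +-4, whereas traces of products of Pauli strings on
   k+2 qubits are 0 or +-2^(k+2). *)
Lemma CkZ_witness_trace (k : nat) :
  \tr (pauli_string R (@witnessQ k.+2) *m
        (CkZ R k.+2 *m pauli_string R (@witnessP k.+2) *m adj (CkZ R k.+2)))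
  = 4 * (-1) ^+ k.
Proof.
have [o [ho ->]] := CkZ_reflection k.+2.
rewrite adj_reflection trace_reflection_conj.
set P := pauli_string R (@witnessP _); set Q := pauli_string R (@witnessQ _).
have XX11 : (pauliX R *m pauliX R) 1 1 = 1.
  by rewrite mxE !big_ord_recr big_ord0 /= !mxE /= mul1r mul0r add0r addr0.
have Z11 : pauliZ R 1 1 = -1 by rewrite mxE.
have trQP : \tr (Q *m P) = 0.
  rewrite /P /Q /pauli_string tens_mul tens_trace (bigD1 (lift ord0 ord0)) //=.
  by rewrite pauli_trace /witnessP /witnessQ /= mulr0 mul0r.
have PQ11 : (P *m Q) o o = (-1) ^+ k.+1.
  rewrite /P /Q /pauli_string tens_mul tens_all_ones // big_ord_recl.
  rewrite /witnessP /witnessQ /= XX11 mul1r -[in RHS](card_ord k.+1) -prodr_const.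
  by apply: eq_bigr => i _; rewrite /= /pauliI mul1mx Z11.
have QP11 : (Q *m P) o o = (-1) ^+ k.+1.
  rewrite /P /Q /pauli_string tens_mul tens_all_ones // big_ord_recl.
  rewrite /witnessP /witnessQ /= XX11 mul1r -[in RHS](card_ord k.+1) -prodr_const.
  by apply: eq_bigr => i _; rewrite /= /pauliI mulmx1 Z11.
have P11 : P o o = 0.
  by rewrite /P /pauli_string tens_all_ones // big_ord_recl /witnessP /= mxE mul0r.
by rewrite trQP PQ11 QP11 P11 exprS; ring.
Qed.

End CkZTrace.

(* The circuit invariant for P = X I ... I, traced against Q = X Z ... Z,
   gives sqrt(2)^t * (+-4) in 2^(k+1) Z[sqrt 2]. *)
Theorem mainTheorem12 (R : realType) (k : nat) (hk : (1 <= k)%N)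
    (c : seq (gate R k.+1)) :
  circuit_ok c ->
  circuit_mx c = CkZ R k.+1 ->
  (2 * k - 2 <= T_count c)%N.
Proof.
case: k hk c => // k _ c hc hC.
have := circuit_conj_span (@witnessP k.+2) hc; rewrite hC.
move=> /(pauli_span_trace (@witnessQ k.+2)) [z [hz]].
rewrite -scalemxAr mxtraceZ CkZ_witness_trace => trace_eq.
have power_eq : real_complex R (Num.sqrt 2) ^+ T_count c = 2 ^+ k * ((-1) ^+ k * z).
  have factor_neq0 : 4 * (-1) ^+ k != 0 :> R[i].
    by rewrite mulf_neq0 ?signr_eq0 ?pnatr_eq0.
  apply: (mulIf factor_neq0); rewrite trace_eq !exprS.
  by rewrite -signr_odd; case: (odd k); rewrite ?expr1 ?expr0; ring.
have := Zsqrt2_power_divisibility (Zsqrt2M (Zsqrt2_sign R k) hz) power_eq.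
lia.
Qed.
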